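(* Let $n\ge 2$, let $A\in\mathbb{R}^{n\times n}$ be symmetric with zero diagonal, let $\lambda\ge\max_i\sum_j|A_{ij}|$, and let $v^*\in\mathbb{R}^{n-1}$ with $v^*_i=A_{ni}$. Let $w^*=\Pi^{n-1}_{B\to\Delta}(v^* )\in\Delta(\lambda,2n-1)$. Then $\nabla\widetilde S(w^* )=0$ and $w^*$ is a global minimizer of $\widetilde S$ over $\Delta(\lambda,2n-1)$.
   Context: Ising model $\mathcal{D}(A,\theta)$ on $\{-1,1\}^n$: $\Pr[Z=z]\propto\exp\big(\sum_{i<j}A_{ij}z_iz_j+\sum_i\theta_iz_i\big)$, $A$ symmetric with zero diagonal. $\mathsf{B}(W,k)=\{x\in\mathbb{R}^k:\|x\|_1\le W\}$, $\Delta(W,k)=\{x\in\mathbb{R}^k:x\ge0,\sum_ix_i=W\}$. Maps: $\Pi^k_{B\to\Delta}:\mathsf{B}(W,k)\to\Delta(W,2k+1)$ with $\Pi^k_{B\to\Delta}(x)_{2k+1}=W-\|x\|_1$, $\Pi^k_{B\to\Delta}(x)_i=\max(x_i,0)$ and $\Pi^k_{B\to\Delta}(x)_{k+i}=\max(-x_i,0)$ for $i\in[k]$; $\Pi^k_{\Delta\to B}:\Delta(W,2k+1)\to\mathsf{B}(W,k)$ with $\Pi^k_{\Delta\to B}(u)_i=u_i-u_{i+k}$, $i\in[k]$. Simplex ISO: for $w\in\mathbb{R}^{2n-1}$, $\widetilde S(w)=\mathbb{E}_{Z\sim\mathcal{D}(A,0)}\big[\exp\big(-\sum_{j=1}^{n-1}(w_j-w_{n-1+j})Z_nZ_j\big)\big]$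 (which equals $S(\Pi^{n-1}_{\Delta\to B}(w))$ for the ISO $S(v)=\mathbb{E}[\exp(-\sum_{j=1}^{n-1}v_jZ_nZ_j)]$). *)

From Stdlib Require Import Reals Lra List.
Import ListNotations.
Open Scope R_scope.

(* Vectors/matrices are functions on nat, 0-indexed: coordinate i of the paper
   (1-indexed) is index i-1 here. *)

Fixpoint rsum (k : nat) (f : nat -> R) : R :=
  match k with
  | O => 0
  | S k' => rsum k' f + f k'
  end.

(* All points of {-1,1}^n, encoded as boolean lists of length n. *)
Fixpoint cube (n : nat) : list (list bool) :=
  match n with
  | O => [nil]
  | S m => flat_map (fun z => [true :: z; false :: z]) (cube m)
  end.

Definition spin (z : list bool) (i : nat) : R :=
  if nth i z false then 1 else -1.

Definition cube_sum (n : nat) (f : list bool -> R) : R :=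
  fold_right Rplus 0 (map f (cube n)).

Definition ising_energy (n : nat) (A : nat -> nat -> R) (theta : nat -> R)
  (z : list bool) : R :=
  rsum n (fun j => rsum j (fun i => A i j * spin z i * spin z j))
  + rsum n (fun i => theta i * spin z i).

Definition ising_expect (n : nat) (A : nat -> nat -> R) (theta : nat -> R)
  (f : list bool -> R) : R :=
  cube_sum n (fun z => exp (ising_energy n A theta z) * f z)
  / cube_sum n (fun z => exp (ising_energy n A theta z)).

(* Simplex ISO: Stilde(w) = E_{Z~D(A,0)}[exp(-sum_{j=1}^{n-1} (w_j - w_{n-1+j}) Z_n Z_j)]
   (0-indexed: j ranges over 0..n-2, Z_n is spin index n-1). *)
Definition Stilde (n : nat) (A : nat -> nat -> R) (w : nat -> R) : R :=
  ising_expect n A (fun _ => 0)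
    (fun z => exp (- rsum (n - 1)
        (fun j => (w j - w (n - 1 + j)%nat) * spin z (n - 1) * spin z j))).

Definition l1norm (k : nat) (x : nat -> R) : R := rsum k (fun i => Rabs (x i)).

Definition in_simplex (W : R) (m : nat) (x : nat -> R) : Prop :=
  (forall i, (i < m)%nat -> 0 <= x i) /\ rsum m x = W.

(* Pi^k_{B -> Delta} : B(W,k) -> Delta(W,2k+1), 0-indexed:
   index i < k : max(x_i,0); index k+i (i<k) : max(-x_i,0); index 2k : W - ||x||_1. *)
Definition piBD (W : R) (k : nat) (x : nat -> R) : nat -> R :=
  fun i =>
    if Nat.ltb i k then Rmax (x i) 0
    else if Nat.ltb i (2 * k) then Rmax (- x (i - k)%nat) 0
    else W - l1norm k x.

Definition upd (w : nat -> R) (i : nat) (t : R) : nat -> R :=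
  fun j => if Nat.eqb j i then t else w j.

From Stdlib Require Import Reals Lra Lia List.
From Coquelicot Require Import Coquelicot.
Import ListNotations.
Open Scope R_scope.

(* Write m = n - 1, so that Z_n is spin number m, and let
   S(v) = E[exp(- sum_j v_j Z_m Z_j)] be the interaction screening objective
   (ISO) in its unconstrained coordinates v.  Since Stilde(w) = S(w_j - w_{m+j}),
   everything reduces to three facts about S at v* = A_m:
   - S is convex, with supporting hyperplanes given by its partial derivatives
     -M_j(v)/P, where P is the partition function and M_j(v) the unnormalized
     tilted moment of Z_m Z_j (tangent bound from exp x >= 1 + x);
   - the tilted moments vanish at v*: the tilt exactly cancels the part of the
     Ising energy depending on Z_m, so the tilted weight does not see Z_m and
     the two values of Z_m contribute opposite amounts to every M_j at v*;
   - moving one coordinate of w moves exactly one difference w_j - w_{m+j}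
     (or none). *)

Lemma rsum_ext k f g :
  (forall i, (i < k)%nat -> f i = g i) -> rsum k f = rsum k g.
Proof.
  induction k as [|k IH]; intros H; simpl; [reflexivity|].
  rewrite IH by (intros; apply H; lia). rewrite H by lia. reflexivity.
Qed.

Lemma rsum_plus k f g : rsum k (fun i => f i + g i) = rsum k f + rsum k g.
Proof. induction k as [|k IH]; simpl; [ring|]. rewrite IH; ring. Qed.

Lemma rsum_scal k c f : rsum k (fun i => c * f i) = c * rsum k f.
Proof. induction k as [|k IH]; simpl; [ring|]. rewrite IH; ring. Qed.

Lemma rsum_zero k : rsum k (fun _ => 0) = 0.
Proof. induction k as [|k IH]; simpl; [ring|]. rewrite IH; ring. Qed.

Lemma rsum_delta m k c g : (k < m)%nat ->
  rsum m (fun j => (if Nat.eqb j k then c else 0) * g j) = c * g k.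
Proof.
  induction m as [|m IH]; intros Hk; [lia|]. simpl.
  destruct (Nat.eq_dec k m) as [->|Hne].
  - rewrite Nat.eqb_refl, (rsum_ext m _ (fun _ => 0)), rsum_zero; [ring|].
    intros i Hi. destruct (Nat.eqb_spec i m); [lia|ring].
  - rewrite IH by lia. destruct (Nat.eqb_spec m k); [lia|ring].
Qed.

Lemma rsum_split a b f :
  rsum (a + b) f = rsum a f + rsum b (fun j => f (a + j)%nat).
Proof.
  induction b as [|b IH].
  - rewrite Nat.add_0_r; simpl; ring.
  - rewrite Nat.add_succ_r. simpl. rewrite IH; ring.
Qed.

Lemma cube_length m z : In z (cube m) -> length z = m.
Proof.
  revert z; induction m as [|m IH]; simpl; intros z H.
  - destruct H as [<-|[]]; reflexivity.
  - apply in_flat_map in H as [y [Hy Hz]].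
    destruct Hz as [<-|[<-|[]]]; simpl; rewrite IH; auto.
Qed.

Lemma cube_sum_ext_in m f g :
  (forall z, In z (cube m) -> f z = g z) -> cube_sum m f = cube_sum m g.
Proof. intros H; unfold cube_sum. rewrite (map_ext_in f g); auto. Qed.

Lemma cube_sum_plus m f g :
  cube_sum m (fun z => f z + g z) = cube_sum m f + cube_sum m g.
Proof. unfold cube_sum; induction (cube m) as [|a l IH]; simpl; [ring|]. rewrite IH; ring. Qed.

Lemma cube_sum_scal m c f : cube_sum m (fun z => c * f z) = c * cube_sum m f.
Proof. unfold cube_sum; induction (cube m) as [|a l IH]; simpl; [ring|]. rewrite IH; ring. Qed.

Lemma cube_sum_zero m : cube_sum m (fun _ => 0) = 0.
Proof. unfold cube_sum; induction (cube m) as [|a l IH]; simpl; [ring|]. rewrite IH; ring. Qed.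

Lemma cube_sum_le m f g : (forall z, f z <= g z) -> cube_sum m f <= cube_sum m g.
Proof.
  intros H; unfold cube_sum. induction (cube m) as [|a l IH]; simpl; [lra|].
  specialize (H a); lra.
Qed.

Lemma cube_sum_pos m f : (forall z, 0 < f z) -> 0 < cube_sum m f.
Proof.
  intros H. induction m as [|m IH]; unfold cube_sum in *; simpl in *; [specialize (H []); lra|].
  destruct (cube m) as [|a l]; simpl in *; [lra|].
  assert (Hrest : 0 <= fold_right Rplus 0 (map f (flat_map (fun z => [true :: z; false :: z]) l))).
  { clear IH. induction l as [|b l IHl]; simpl; [lra|].
    pose proof (H (true :: b)); pose proof (H (false :: b)); lra. }
  pose proof (H (true :: a)); pose proof (H (false :: a)); lra.
Qed.

Lemma cube_sum_rsum m k F :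
  cube_sum m (fun z => rsum k (F z)) = rsum k (fun j => cube_sum m (fun z => F z j)).
Proof.
  induction k as [|k IH]; simpl; [apply cube_sum_zero|].
  rewrite cube_sum_plus, IH. reflexivity.
Qed.

Lemma cube_sum_first m f :
  cube_sum (S m) f = cube_sum m (fun z => f (true :: z) + f (false :: z)).
Proof.
  unfold cube_sum; simpl. induction (cube m) as [|a l IH]; simpl; [reflexivity|].
  rewrite IH; ring.
Qed.

Lemma cube_sum_last m : forall f,
  cube_sum (S m) f = cube_sum m (fun z => f (z ++ [true]) + f (z ++ [false])).
Proof.
  induction m as [|m IH]; intros f; rewrite cube_sum_first; [reflexivity|].
  rewrite IH, cube_sum_first. apply cube_sum_ext_in. intros z _. simpl. ring.
Qed.

Lemma is_derive_cube_sum m (h : list bool -> R -> R) h' x :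
  (forall z, is_derive (h z) x (h' z)) ->
  is_derive (fun t => cube_sum m (fun z => h z t)) x (cube_sum m h').
Proof.
  intros H. unfold cube_sum. induction (cube m) as [|a l IH]; simpl.
  - apply (is_derive_const (K:=R_AbsRing) 0 x).
  - apply (is_derive_plus (K:=R_AbsRing) (h a)
      (fun t => fold_right Rplus 0 (map (fun z => h z t) l))); auto.
Qed.

Definition spin_of (b : bool) : R := if b then 1 else -1.

Lemma spin_snoc_lt z b i : (i < length z)%nat -> spin (z ++ [b]) i = spin z i.
Proof. intros H; unfold spin. rewrite app_nth1 by exact H. reflexivity. Qed.

Lemma spin_snoc_last z b m : length z = m -> spin (z ++ [b]) m = spin_of b.
Proof. intros <-. unfold spin. rewrite app_nth2, Nat.sub_diag by lia. reflexivity. Qed.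

Lemma ising_energy_snoc m A z b :
  (forall i, (i < m)%nat -> A i m = A m i) -> length z = m ->
  ising_energy (S m) A (fun _ => 0) (z ++ [b]) =
  ising_energy m A (fun _ => 0) z + spin_of b * rsum m (fun i => A m i * spin z i).
Proof.
  intros Hsym Hlen. unfold ising_energy. simpl.
  rewrite !(rsum_ext _ (fun i => 0 * spin _ i) (fun _ => 0)) by (intros; ring).
  rewrite (rsum_ext m (fun j => rsum j _)
             (fun j => rsum j (fun i => A i j * spin z i * spin z j))).
  2: { intros j Hj. apply rsum_ext. intros i Hi.
       rewrite !spin_snoc_lt by lia. reflexivity. }
  rewrite <- rsum_scal, (rsum_ext m (fun i => A i m * _ * _)
                           (fun i => spin_of b * (A m i * spin z i))).
  - rewrite !rsum_zero. ring.
  - intros i Hi. rewrite (spin_snoc_last _ _ m), spin_snoc_lt, Hsym by lia. ring.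
Qed.

(* Exponent of the ISO: sum_j v_j z_m z_j (spin m plays the role of Z_n). *)
Definition tilt (m : nat) (v : nat -> R) (z : list bool) : R :=
  rsum m (fun j => v j * spin z m * spin z j).

Definition iso (m : nat) (A : nat -> nat -> R) (v : nat -> R) : R :=
  ising_expect (S m) A (fun _ => 0) (fun z => exp (- tilt m v z)).

Definition gibbs (m : nat) (A : nat -> nat -> R) (z : list bool) : R :=
  exp (ising_energy (S m) A (fun _ => 0) z).

Definition partition (m : nat) (A : nat -> nat -> R) : R :=
  cube_sum (S m) (gibbs m A).

(* Unnormalized moment of Z_m Z_j under the measure tilted by exp(-tilt v);
   -M_j(v)/P is the partial derivative of S at v. *)
Definition tilted_moment (m : nat) (A : nat -> nat -> R) (v : nat -> R) (j : nat) : R :=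
  cube_sum (S m) (fun z => gibbs m A z * exp (- tilt m v z) * (spin z m * spin z j)).

Lemma iso_unfold m A v :
  iso m A v = cube_sum (S m) (fun z => gibbs m A z * exp (- tilt m v z)) / partition m A.
Proof. reflexivity. Qed.

Lemma partition_pos m A : 0 < partition m A.
Proof. apply cube_sum_pos. intros z. apply exp_pos. Qed.

Lemma iso_ext m A u v : (forall j, (j < m)%nat -> u j = v j) -> iso m A u = iso m A v.
Proof.
  intros H. rewrite !iso_unfold. f_equal. apply cube_sum_ext_in. intros z _.
  unfold tilt. do 3 f_equal. apply rsum_ext. intros j Hj. rewrite H by exact Hj. reflexivity.
Qed.

Lemma Stilde_iso m A w : Stilde (S m) A w = iso m A (fun j => w j - w (m + j)%nat).
Proof. unfold Stilde, iso, tilt. simpl. rewrite Nat.sub_0_r. reflexivity. Qed.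

Lemma iso_tangent_below m A u v :
  iso m A v - rsum m (fun j => (u j - v j) * tilted_moment m A v j) / partition m A
  <= iso m A u.
Proof.
  rewrite !iso_unfold.
  set (G := fun z => gibbs m A z * exp (- tilt m v z)).
  set (Rz := fun z => rsum m (fun j => (u j - v j) * (spin z m * spin z j))).
  assert (Hlin : rsum m (fun j => (u j - v j) * tilted_moment m A v j) =
                 cube_sum (S m) (fun z => G z * Rz z)).
  { unfold Rz, tilted_moment.
    rewrite (cube_sum_ext_in _ _
      (fun z => rsum m (fun j => (u j - v j) * (G z * (spin z m * spin z j))))).
    - rewrite cube_sum_rsum. apply rsum_ext. intros j _. rewrite cube_sum_scal. reflexivity.
    - intros z _. rewrite <- rsum_scal. apply rsum_ext. intros; ring. }
  assert (Hpoint : forall z, G z - G z * Rz z <= gibbs m A z * exp (- tilt m u z)).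
  { intros z.
    assert (Htilt : tilt m u z = tilt m v z + Rz z).
    { unfold tilt, Rz. rewrite <- rsum_plus. apply rsum_ext. intros; ring. }
    rewrite Htilt, Ropp_plus_distr, exp_plus.
    pose proof (exp_ineq1_le (- Rz z)).
    assert (HG : 0 < G z) by (apply Rmult_lt_0_compat; apply exp_pos).
    unfold G in *. nra. }
  rewrite Hlin. unfold Rdiv. rewrite <- Rmult_minus_distr_r.
  apply Rmult_le_compat_r; [left; apply Rinv_0_lt_compat, partition_pos|].
  replace (cube_sum (S m) G - cube_sum (S m) (fun z => G z * Rz z))
    with (cube_sum (S m) (fun z => G z - G z * Rz z)).
  - apply cube_sum_le. exact Hpoint.
  - unfold Rminus. rewrite cube_sum_plus.
    rewrite (cube_sum_ext_in _ (fun z => - _) (fun z => -1 * (G z * Rz z))) by (intros; ring).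
    rewrite cube_sum_scal. ring.
Qed.

Lemma iso_partial_derivative m A v k sigma t0 : (k < m)%nat ->
  is_derive (fun t => iso m A (fun j => v j + (if Nat.eqb j k then sigma * (t - t0) else 0)))
    t0 (- sigma * tilted_moment m A v k / partition m A).
Proof.
  intros Hk.
  set (G := fun z => gibbs m A z * exp (- tilt m v z)).
  set (s := fun z => sigma * (spin z m * spin z k)).
  apply (is_derive_ext (fun t => cube_sum (S m) (fun z => G z * exp (- (s z * (t - t0))))
                                  * / partition m A)).
  { intros t. rewrite iso_unfold. unfold Rdiv. f_equal. apply cube_sum_ext_in. intros z _.
    unfold G. rewrite Rmult_assoc, <- exp_plus. f_equal. f_equal. symmetry.
    unfold tilt at 1.
    rewrite (rsum_ext m _ (fun j => v j * spin z m * spin z j +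
              (if Nat.eqb j k then sigma * (t - t0) else 0) * (spin z m * spin z j)))
      by (intros; ring).
    rewrite rsum_plus, rsum_delta by exact Hk. unfold tilt, s. ring. }
  replace (- sigma * tilted_moment m A v k / partition m A)
    with (cube_sum (S m) (fun z => G z * - s z) * / partition m A).
  - apply (is_derive_scal_l (K:=R_AbsRing) (V:=R_NormedModule)).
    apply is_derive_cube_sum. intros z.
    auto_derive; [exact I|]. rewrite Rplus_opp_r, Rmult_0_r, Ropp_0, exp_0. ring.
  - unfold tilted_moment, Rdiv. f_equal.
    rewrite <- cube_sum_scal. apply cube_sum_ext_in. intros z _. unfold G, s. ring.
Qed.

Lemma tilted_gibbs_forgets_last_spin m A z b :
  (forall i, (i < m)%nat -> A i m = A m i) -> length z = m ->
  gibbs m A (z ++ [b]) * exp (- tilt m (A m) (z ++ [b])) =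
  exp (ising_energy m A (fun _ => 0) z).
Proof.
  intros Hsym Hlen. unfold gibbs. rewrite <- exp_plus, ising_energy_snoc by assumption.
  assert (Htilt : tilt m (A m) (z ++ [b]) = spin_of b * rsum m (fun i => A m i * spin z i)).
  { unfold tilt. rewrite <- rsum_scal. apply rsum_ext. intros i Hi.
    rewrite (spin_snoc_last _ _ m), spin_snoc_lt by lia. ring. }
  rewrite Htilt. f_equal. ring.
Qed.

Lemma tilted_moment_vanishes m A k :
  (forall i, (i < m)%nat -> A i m = A m i) -> (k < m)%nat ->
  tilted_moment m A (A m) k = 0.
Proof.
  intros Hsym Hk. unfold tilted_moment. rewrite cube_sum_last, <- (cube_sum_zero m).
  apply cube_sum_ext_in. intros z Hz. pose proof (cube_length _ _ Hz) as Hlen.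
  rewrite !tilted_gibbs_forgets_last_spin by assumption.
  rewrite !(spin_snoc_last _ _ m), !spin_snoc_lt by lia.
  unfold spin_of. ring.
Qed.

Lemma piBD_diff W k x j : (j < k)%nat -> piBD W k x j - piBD W k x (k + j) = x j.
Proof.
  intros Hj. unfold piBD.
  rewrite (proj2 (Nat.ltb_lt j k) Hj), (proj2 (Nat.ltb_ge (k + j) k)) by lia.
  rewrite (proj2 (Nat.ltb_lt (k + j) (2 * k))) by lia.
  replace (k + j - k)%nat with j by lia.
  unfold Rmax. destruct (Rle_dec (x j) 0), (Rle_dec (- x j) 0); lra.
Qed.

Lemma piBD_in_simplex W k x : l1norm k x <= W -> in_simplex W (S (2 * k)) (piBD W k x).
Proof.
  intros Hx. split.
  - intros i _. unfold piBD.
    destruct (Nat.ltb i k); [apply Rmax_r|].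
    destruct (Nat.ltb i (2 * k)); [apply Rmax_r|lra].
  - change (rsum (2 * k) (piBD W k x) + piBD W k x (2 * k) = W).
    replace (2 * k)%nat with (k + k)%nat at 1 2 by lia. rewrite rsum_split.
    unfold piBD at 3. rewrite (proj2 (Nat.ltb_ge (k + k) k)), (proj2 (Nat.ltb_ge (k + k) (2 * k))) by lia.
    rewrite <- rsum_plus.
    rewrite (rsum_ext k _ (fun i => Rabs (x i))); [unfold l1norm; ring|].
    intros i Hi. unfold piBD.
    rewrite (proj2 (Nat.ltb_lt i k) Hi), (proj2 (Nat.ltb_ge (k + i) k)) by lia.
    rewrite (proj2 (Nat.ltb_lt (k + i) (2 * k))) by lia.
    replace (k + i - k)%nat with i by lia.
    unfold Rmax, Rabs. destruct (Rle_dec (x i) 0), (Rle_dec (- x i) 0), (Rcase_abs (x i)); lra.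
Qed.

(* Changing one coordinate of w in R^(2k+1) changes at most one difference
   w_j - w_{k+j}, with sign +1 (j-th coordinate), -1 (coordinate k+j) or 0
   (the slack coordinate 2k). *)
Lemma upd_diff_shift w k i : (0 < k)%nat -> (i < S (2 * k))%nat ->
  exists sigma kk, (kk < k)%nat /\ forall t j, (j < k)%nat ->
    upd w i t j - upd w i t (k + j) =
    (w j - w (k + j)%nat) + (if Nat.eqb j kk then sigma * (t - w i) else 0).
Proof.
  intros Hk Hi. unfold upd.
  destruct (Nat.lt_ge_cases i k) as [H1|H1]; [|destruct (Nat.lt_ge_cases i (2 * k)) as [H2|H2]].
  - exists 1, i. split; [exact H1|]. intros t j Hj.
    destruct (Nat.eqb_spec (k + j) i); [lia|].
    destruct (Nat.eqb_spec j i) as [->|]; ring.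
  - exists (-1), (i - k)%nat. split; [lia|]. intros t j Hj.
    destruct (Nat.eqb_spec j i); [lia|].
    destruct (Nat.eqb_spec (k + j) i), (Nat.eqb_spec j (i - k)); try lia; subst; ring.
  - exists 0, 0%nat. split; [exact Hk|]. intros t j Hj.
    destruct (Nat.eqb_spec j i), (Nat.eqb_spec (k + j) i); try lia.
    destruct (Nat.eqb j 0); ring.
Qed.

Theorem mainTheorem4 (n : nat) (A : nat -> nat -> R) (lam : R)
  (hn : (2 <= n)%nat)
  (hsym : forall i j, (i < n)%nat -> (j < n)%nat -> A i j = A j i)
  (hdiag : forall i, (i < n)%nat -> A i i = 0)
  (hlam : forall i, (i < n)%nat -> rsum n (fun j => Rabs (A i j)) <= lam) :
  let vstar : nat -> R := fun i => A (n - 1)%nat i in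
  let wstar : nat -> R := piBD lam (n - 1) vstar in
  in_simplex lam (2 * n - 1) wstar /\
  (forall i, (i < 2 * n - 1)%nat ->
     derivable_pt_lim (fun t => Stilde n A (upd wstar i t)) (wstar i) 0) /\
  (forall w, in_simplex lam (2 * n - 1) w -> Stilde n A wstar <= Stilde n A w).
Proof.
  intros vstar wstar. subst vstar wstar.
  destruct n as [|m]; [lia|].
  replace (S m - 1)%nat with m by lia. replace (2 * S m - 1)%nat with (S (2 * m)) by lia.
  set (wstar := piBD lam m (A m)).
  assert (Hsym : forall i, (i < m)%nat -> A i m = A m i) by (intros; apply hsym; lia).
  assert (Hdiff : forall j, (j < m)%nat -> wstar j - wstar (m + j)%nat = A m j)
    by (intros; apply piBD_diff; assumption).
  assert (Hstar : Stilde (S m) A wstar = iso m A (A m))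
    by (rewrite Stilde_iso; apply iso_ext; exact Hdiff).
  split; [|split].
  - apply piBD_in_simplex.
    pose proof (hlam m ltac:(lia)) as Hrow. simpl in Hrow.
    rewrite hdiag, Rabs_R0 in Hrow by lia. unfold l1norm. lra.
  - intros i Hi.
    destruct (upd_diff_shift wstar m i ltac:(lia) Hi) as [sigma [k [Hk Hshift]]].
    apply is_derive_Reals.
    apply (is_derive_ext (fun t => iso m A (fun j => A m j +
             (if Nat.eqb j k then sigma * (t - wstar i) else 0)))).
    { intros t. rewrite Stilde_iso. apply iso_ext. intros j Hj.
      rewrite Hshift, Hdiff by exact Hj. reflexivity. }
    pose proof (iso_partial_derivative m A (A m) k sigma (wstar i) Hk) as Hderiv.
    rewrite tilted_moment_vanishes in Hderiv by assumption.
    replace (- sigma * 0 / partition m A) with 0 in Hderiv by (unfold Rdiv; ring).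
    exact Hderiv.
  - intros w _. rewrite Hstar, Stilde_iso.
    eapply Rle_trans; [|apply (iso_tangent_below m A _ (A m))].
    rewrite (rsum_ext m _ (fun _ => 0)), rsum_zero; [unfold Rdiv; lra|].
    intros j Hj. rewrite tilted_moment_vanishes by assumption. ring.
Qed.
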